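(* Let $\alpha=[a_0;a_1,\dots,a_r,\overline{b_1,\dots,b_s}]\in\widehat K$ with $r\ge1$, $s\ge1$, $a_0\in R$ and $a_1,\dots,a_r,b_1,\dots,b_s$ nonconstant polynomials in $R$, and let $\alpha^\sigma$ be its Galois conjugate over $K$. If $a_r\ne b_s$, then $h(\alpha)=|\alpha-\alpha^\sigma|^{-1}=q^{\,2\left(\sum_{i=1}^r\deg a_i\right)-\deg a_r-\deg b_s+\deg(a_r-b_s)}.$
   Context: $q$ is a positive power of a prime, $R=\mathbb F_q[Y]$, $K=\mathbb F_q(Y)$, $\widehat K=\mathbb F_q((Y^{-1}))$ with absolute value $|P/Q|=q^{\deg P-\deg Q}$ extended to $\widehat K$. $[a_0;a_1,a_2,\dots]$ denotes the continued fraction $a_0+1/(a_1+1/(a_2+\cdots))$ and an overline indicates a block repeated infinitely often. Such an eventually periodic expansion represents a quadratic power series over $K$. *)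

From HB Require Import structures.
From mathcomp Require Import all_boot all_order all_algebra.
From mathcomp Require Import fraction reals.
Set Implicit Arguments. Unset Strict Implicit. Unset Printing Implicit Defensive.
Import Order.TTheory GRing.Theory Num.Theory.
Local Open Scope ring_scope.

Definition tof (F : finFieldType) (p : {poly F}) : {fraction {poly F}} :=
  @FracField.tofrac _ p.

Section Khat.
Variables (F : finFieldType) (L : fieldType) (R : realType).
Variable emb : {rmorphism {fraction {poly F}} -> L}.
Variable av : L -> R.

(* q = #|F|, |P| = q ^ deg P *)
Definition qF : R := (#|F|)%:R.

Definition cauchy_seq (u : nat -> L) : Prop :=
  forall eps : R, 0 < eps -> exists N : nat,
    forall m n : nat, (N <= m)%N -> (N <= n)%N -> av (u m - u n) < eps.

Definition converges_to (u : nat -> L) (l : L) : Prop :=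
  forall eps : R, 0 < eps -> exists N : nat,
    forall n : nat, (N <= n)%N -> av (u n - l) < eps.

(* (L, av) together with emb : K -> L is a completion of K = F_q(Y) with
   respect to the absolute value |P/Q| = q^(deg P - deg Q), i.e. a model of
   \hat K = F_q((Y^{-1})) (unique up to isometric K-isomorphism). *)
Definition is_Khat : Prop :=
  (forall x, av x = 0 <-> x = 0) /\
  (forall x, 0 <= av x) /\
  (forall x y, av (x * y) = av x * av y) /\
  (forall x y, av (x + y) <= Num.max (av x) (av y)) /\
  (forall p : {poly F}, p != 0 -> av (emb (tof p)) = qF ^+ (size p).-1) /\
  (forall x eps, 0 < eps -> exists k, av (x - emb k) < eps) /\
  (forall u, cauchy_seq u -> exists l, converges_to u l).

Fixpoint cf_eval (s : seq L) : L :=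
  match s with
  | [::] => 0
  | [:: x] => x
  | x :: t => x + (cf_eval t)^-1
  end.

Definition convergent (a : nat -> {poly F}) (n : nat) : L :=
  cf_eval [seq emb (tof (a i)) | i <- iota 0 n.+1].

Definition cf_value (a : nat -> {poly F}) (alpha : L) : Prop :=
  converges_to (convergent a) alpha.

Definition inK (x : L) : Prop := exists k, x = emb k.

(* alphas is the Galois conjugate of alpha over K (alpha of degree <= 2):
   alphas = alpha if alpha is in K, otherwise alpha and alphas are the two
   roots (with multiplicity) of the minimal polynomial X^2 + c1 X + c0. *)
Definition galois_conj (alpha alphas : L) : Prop :=
  (inK alpha /\ alphas = alpha) \/
  (~ inK alpha /\ exists c1 c0 : {fraction {poly F}},
      [/\ alpha ^+ 2 + emb c1 * alpha + emb c0 = 0,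
          alphas ^+ 2 + emb c1 * alphas + emb c0 = 0
        & alpha + alphas = - emb c1]).

End Khat.

(* partial quotients of [a0; a_1, ..., a_r, overline(b_1, ..., b_s)] *)
Definition pq (F : finFieldType) (a0 : {poly F}) (as_ bs : seq {poly F})
  (n : nat) : {poly F} :=
  if n == 0%N then a0
  else if (n <= size as_)%N then nth 0 as_ n.-1
  else nth 0 bs ((n.-1 - size as_) %% size bs).

Definition nonconst (F : finFieldType) (p : {poly F}) : bool := (1 < size p)%N.

Definition pdeg (F : finFieldType) (p : {poly F}) : int := (size p).-1%:Z.

(* Write alpha = [a_0; a_1, ..., a_r, beta], where beta = [b_1; ..., b_s, beta] is
   purely periodic.  If [[P, P'], [Q, Q']] is the continuant matrix of a_0, ..., a_r,
   then alpha = (P beta + P') / (Q beta + Q'), and the conjugate of alpha is obtained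
   by replacing beta with the second root beta' of its fixed-point equation; by
   Vieta, |1/beta' + b_s| < 1.  As the determinant is +-1,
     |alpha - alpha'| = |beta - beta'| / (|Q beta + Q'| |Q beta' + Q'|),
   where |beta - beta'| = |beta|, |Q beta + Q'| = |Q| |beta|, and
   |Q beta' + Q'| = |Q'| |a_r - b_s| / |b_s| because a_r <> b_s makes
   |a_r - b_s| >= 1 dominate the error |1/beta' + b_s|.  Finally
   |Q| = q^(deg a_1 + ... + deg a_r) and |Q'| = |Q| / |a_r|. *)

From HB Require Import structures.
From mathcomp Require Import all_boot all_order all_algebra.
From mathcomp Require Import fraction reals.
From mathcomp Require Import ring.
Import Order.TTheory GRing.Theory Num.Theory.
Local Open Scope ring_scope.
Set Implicit Arguments. Unset Strict Implicit. Unset Printing Implicit Defensive.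

Lemma map_iota0S (T : Type) (f : nat -> T) n :
  [seq f i | i <- iota 0 n.+1] = f 0%N :: [seq f i.+1 | i <- iota 0 n].
Proof. by rewrite /= (iotaDl 1 0) -map_comp. Qed.

Record mobius (T : Type) := Mobius { mob_a : T; mob_b : T; mob_c : T; mob_d : T }.

Definition mob_map (T U : Type) (f : T -> U) (M : mobius T) : mobius U :=
  Mobius (f (mob_a M)) (f (mob_b M)) (f (mob_c M)) (f (mob_d M)).

Section Continuant.
Variable T : comNzRingType.

Definition mob_det (M : mobius T) : T := mob_a M * mob_d M - mob_b M * mob_c M.

(* The product of the matrices [[x, 1], [1, 0]], x in [s], that is
   [[p_n, p_(n-1)], [q_n, q_(n-1)]] where the p_k / q_k are the convergents of [s]. *)
Fixpoint continuant (s : seq T) : mobius T :=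
  if s is x :: s' then
    let M := continuant s' in
    Mobius (x * mob_a M + mob_c M) (x * mob_b M + mob_d M) (mob_a M) (mob_b M)
  else Mobius 1 0 0 1.

Lemma continuant_rcons s x :
  continuant (rcons s x) =
  Mobius (mob_a (continuant s) * x + mob_b (continuant s)) (mob_a (continuant s))
         (mob_c (continuant s) * x + mob_d (continuant s)) (mob_c (continuant s)).
Proof. by elim: s => [|y s /= ->] /=; congr Mobius; ring. Qed.

Lemma mob_det_continuant s : mob_det (continuant s) = (-1) ^+ size s.
Proof.
elim: s => [|x s IHs] /=; first by rewrite /mob_det /=; ring.
by rewrite exprS -IHs /mob_det /=; ring.
Qed.

End Continuant.

Lemma continuant_map (T U : comNzRingType) (f : {rmorphism T -> U}) s :
  continuant (map f s) = mob_map f (continuant s).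
Proof.
elim: s => [|x s /= ->] /=; first by rewrite /mob_map /= rmorph0 rmorph1.
by rewrite /mob_map /= !rmorphD !rmorphM.
Qed.

Section MobiusField.
Variable T : fieldType.

Definition mob_app (M : mobius T) (x : T) : T :=
  (mob_a M * x + mob_b M) / (mob_c M * x + mob_d M).

Lemma mob_app_sub M x y :
  mob_c M * x + mob_d M != 0 -> mob_c M * y + mob_d M != 0 ->
  mob_app M x - mob_app M y =
  mob_det M * (x - y) / ((mob_c M * x + mob_d M) * (mob_c M * y + mob_d M)).
Proof. by move=> nx ny; rewrite /mob_app /mob_det; field; rewrite nx ny. Qed.

Lemma mob_app_fixed M x :
  mob_c M * x + mob_d M != 0 -> mob_app M x = x ->
  mob_c M * x ^+ 2 + (mob_d M - mob_a M) * x - mob_b M = 0.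
Proof.
move=> nx fx; have ax : mob_a M * x + mob_b M = x * (mob_c M * x + mob_d M).
  by rewrite -{2}fx /mob_app mulrC divfK.
transitivity (x * (mob_c M * x + mob_d M) - (mob_a M * x + mob_b M)); first ring.
by rewrite ax subrr.
Qed.

Lemma mob_app_cons x s t :
  mob_a (continuant s) * t + mob_b (continuant s) != 0 ->
  mob_app (continuant (x :: s)) t = x + (mob_app (continuant s) t)^-1.
Proof. by move=> nt; rewrite /mob_app /= invf_div; field. Qed.

Lemma quadratic_other_root (A B C x y : T) :
  C != 0 -> x != 0 -> y != 0 -> x^-1 + y^-1 = - (B / C) ->
  A * x ^+ 2 + B * x + C = 0 -> A * y ^+ 2 + B * y + C = 0.
Proof.
move=> nC nx ny hxy hx.
have -> : A * y ^+ 2 + B * y + C = y ^+ 2 * (C * y^-1 ^+ 2 + B * y^-1 + A) by field.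
have -> : y^-1 = - (B / C) - x^-1 by rewrite -hxy addrC addKr.
have -> : C * (- (B / C) - x^-1) ^+ 2 + B * (- (B / C) - x^-1) + A =
          (A * x ^+ 2 + B * x + C) / x ^+ 2 by field; rewrite nC nx.
by rewrite hx mul0r mulr0.
Qed.

End MobiusField.

Section Conjugates.
Variables (F : finFieldType) (L : fieldType).
Variable emb : {rmorphism {fraction {poly F}} -> L}.
Local Notation K := {fraction {poly F}}.

Lemma emb_lin_eq0 (c d : K) x :
  ~ inK emb x -> emb c * x + emb d = 0 -> c = 0 /\ d = 0.
Proof.
move=> xK hx; have c0 : c = 0.
  apply/eqP/negP => /negP nc; apply: xK; exists (- d / c).
  have nc' : emb c != 0 by rewrite fmorph_eq0.
  rewrite fmorph_div rmorphN; apply: (mulIf nc'); rewrite divfK //.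
  by apply/eqP; rewrite mulrC -addr_eq0 hx.
split=> //; apply/eqP; rewrite -(fmorph_eq0 emb).
by move: hx; rewrite c0 rmorph0 mul0r add0r => ->.
Qed.

Definition quad (c2 c1 c0 : K) (x : L) : L := emb c2 * x ^+ 2 + emb c1 * x + emb c0.

Definition quad_conj (x y : L) : Prop :=
  forall c2 c1 c0 : K, quad c2 c1 c0 x = 0 -> quad c2 c1 c0 y = 0.

Lemma quad_conj_root (A B C : K) x y :
  ~ inK emb x -> A != 0 -> quad A B C x = 0 -> quad A B C y = 0 -> quad_conj x y.
Proof.
move=> xK nA hx hy c2 c1 c0 hc.
have [h1 h0] : A * c1 - c2 * B = 0 /\ A * c0 - c2 * C = 0.
  apply: emb_lin_eq0 xK _; rewrite !rmorphB !rmorphM.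
  transitivity (emb A * quad c2 c1 c0 x - emb c2 * quad A B C x).
    by rewrite /quad; ring.
  by rewrite hc hx !mulr0 subrr.
have nA' : emb A != 0 by rewrite fmorph_eq0.
apply: (mulfI nA'); rewrite mulr0.
transitivity (emb c2 * quad A B C y + emb (A * c1 - c2 * B) * y + emb (A * c0 - c2 * C)).
  by rewrite /quad !rmorphB !rmorphM; ring.
by rewrite hy h1 h0 rmorph0; ring.
Qed.

Lemma quad_conj_mob (M : mobius K) x y :
  mob_c (mob_map emb M) * x + mob_d (mob_map emb M) != 0 ->
  mob_c (mob_map emb M) * y + mob_d (mob_map emb M) != 0 ->
  quad_conj x y -> quad_conj (mob_app (mob_map emb M) x) (mob_app (mob_map emb M) y).
Proof.
case: M => a b c d /= nx ny hxy c2 c1 c0.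
pose g2 := c2 * a ^+ 2 + c1 * a * c + c0 * c ^+ 2.
pose g1 := c2 * (a * b + a * b) + c1 * (a * d + b * c) + c0 * (c * d + c * d).
pose g0 := c2 * b ^+ 2 + c1 * b * d + c0 * d ^+ 2.
have homog t : emb c * t + emb d != 0 ->
    quad c2 c1 c0 (mob_app (mob_map emb (Mobius a b c d)) t) =
    quad g2 g1 g0 t / (emb c * t + emb d) ^+ 2.
  by move=> nt; rewrite /quad /mob_app /= !rmorphD !rmorphM; field.
rewrite !homog // => /eqP; rewrite mulf_eq0 invr_eq0 expf_eq0 (negbTE nx) andbF orbF.
by move=> /eqP /hxy ->; rewrite mul0r.
Qed.

Lemma galois_conj_eq x xs y :
  ~ inK emb x -> galois_conj emb x xs -> quad_conj x y -> y != x -> xs = y.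
Proof.
move=> xK [[/xK //]|[_ [c1 [c0 [hx _ hsum]]]]] hxy nyx.
have qx : quad 1 c1 c0 x = 0 by rewrite /quad rmorph1 mul1r.
have : (y - x) * (y + x + emb c1) = 0.
  transitivity (quad 1 c1 c0 y - quad 1 c1 c0 x); first by rewrite /quad rmorph1; ring.
  by rewrite (hxy _ _ _ qx) qx subrr.
move/eqP; rewrite mulf_eq0 subr_eq0 (negbTE nyx) /= => /eqP hy.
have -> : xs = - emb c1 - x by rewrite -hsum; ring.
have -> : y = (y + x + emb c1) - emb c1 - x by ring.
by rewrite hy sub0r.
Qed.

Lemma frac_numden (k : K) : exists u w, w != 0 /\ k = tof u / tof w.
Proof.
elim/quotW: k => x; exists x.1, x.2; split; first exact: denom_ratioP.
rewrite /tof -[_ / _]/(FracField.mul _ (FracField.inv _)) !piE.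
apply/eqmodP; rewrite /= FracField.equivfE /FracField.mulf /FracField.invf /=.
by rewrite !numden_Ratio ?mulf_neq0 ?denom_ratioP ?oner_eq0 // mul1r mulr1 mulrC.
Qed.

End Conjugates.

Lemma periodic_nonconst (F : finFieldType) (bs : seq {poly F}) n :
  all (@nonconst F) bs -> (0 < size bs)%N -> nonconst (nth 0 bs (n %% size bs)).
Proof. by move=> hbs bs0; apply: (allP hbs); rewrite mem_nth // ltn_pmod. Qed.

Lemma pq_nonconst (F : finFieldType) (a0 : {poly F}) as_ bs n :
  all (@nonconst F) as_ -> all (@nonconst F) bs -> (0 < size bs)%N ->
  nonconst (pq a0 as_ bs n.+1).
Proof.
move=> has hbs bs0; rewrite /pq /=; case: ifP => hn; last exact: periodic_nonconst.
by apply: (allP has); rewrite mem_nth.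
Qed.

Section UltrametricField.
Variables (L : fieldType) (R : realType).

Definition ultrametric_abs (av : L -> R) : Prop :=
  [/\ forall x, av x = 0 <-> x = 0, forall x, 0 <= av x,
      forall x y, av (x * y) = av x * av y
    & forall x y, av (x + y) <= Num.max (av x) (av y)].

Variable av : L -> R.
Hypothesis Hav : ultrametric_abs av.

Lemma av_eq0 x : av x = 0 <-> x = 0. Proof. by case: Hav. Qed.
Lemma av_ge0 x : 0 <= av x. Proof. by case: Hav. Qed.
Lemma avM x y : av (x * y) = av x * av y. Proof. by case: Hav. Qed.
Lemma av_max x y : av (x + y) <= Num.max (av x) (av y). Proof. by case: Hav. Qed.

Lemma av0 : av 0 = 0. Proof. exact/av_eq0. Qed.

Lemma av_gt0 x : (0 < av x) = (x != 0).
Proof.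
rewrite lt_def av_ge0 andbT; apply/idP/idP; apply: contra => /eqP.
  by move->; rewrite av0.
by move/av_eq0->.
Qed.

Lemma av1 : av 1 = 1.
Proof.
have h1 : av 1 != 0 by rewrite gt_eqF ?av_gt0 ?oner_eq0.
by apply: (mulfI h1); rewrite -avM !mulr1.
Qed.

Lemma avX x n : av (x ^+ n) = av x ^+ n.
Proof. by elim: n => [|n IHn]; rewrite ?av1 // !exprS avM IHn. Qed.

Lemma avN x : av (- x) = av x.
Proof.
have : av (-1) ^+ 2 == 1 by rewrite -avX sqrrN expr1n av1.
rewrite sqrf_eq1 => /orP [/eqP h1|/eqP hN]; first by rewrite -mulN1r avM h1 mul1r.
by have := av_ge0 (-1); rewrite hN oppr_ge0 ler10.
Qed.

Lemma avV x : av x^-1 = (av x)^-1.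
Proof.
have [->|nx] := eqVneq x 0; first by rewrite invr0 av0 invr0.
have ax0 : av x != 0 by rewrite gt_eqF // av_gt0.
by apply: (mulfI ax0); rewrite -avM !mulfV ?av1.
Qed.

Lemma avD_lt x y c : av x < c -> av y < c -> av (x + y) < c.
Proof. by move=> hx hy; apply: le_lt_trans (av_max x y) _; rewrite gt_max hx hy. Qed.

Lemma avD_eq x y : av x < av y -> av (x + y) = av y.
Proof.
move=> hxy; apply/eqP; rewrite eq_le; apply/andP; split.
  by apply: le_trans (av_max x y) _; rewrite ge_max lexx (ltW hxy).
rewrite leNgt; apply/negP => hlt.
by have := avD_lt (x := x + y) (y := - x) hlt; rewrite avN (addrC x) addrK ltxx => /(_ hxy).
Qed.

Definition large x := 1 < av x.

Lemma large_neq0 x : large x -> x != 0.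
Proof. by rewrite /large; apply: contraTneq => ->; rewrite av0 ltr10. Qed.

Lemma avV_lt1 x : large x -> av x^-1 < 1.
Proof. by rewrite /large avV => h; rewrite invf_lt1 // (lt_trans ltr01 h). Qed.

Lemma av_near_opp x y : av (x + y) < 1 -> large y -> av x = av y.
Proof.
move=> hxy hy; rewrite -(addrK y x) avD_eq ?avN //.
exact: lt_trans hxy hy.
Qed.

Lemma cf_eval_cons (x : L) s : s != [::] -> cf_eval (x :: s) = x + (cf_eval s)^-1.
Proof. by case: s. Qed.

Lemma av_cf_eval x s : all large (x :: s) -> av (cf_eval (x :: s)) = av x.
Proof.
elim: s x => [//|y s IHs] x /andP [hx hs].
rewrite cf_eval_cons // addrC avD_eq //; apply: lt_trans hx.
by apply: avV_lt1; rewrite /large IHs //; case/andP: hs.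
Qed.

Lemma large_cf_eval s : s != [::] -> all large s -> large (cf_eval s).
Proof. by case: s => // x s _ hs; rewrite /large av_cf_eval //; case/andP: hs. Qed.

Lemma cf_eval_mob x s t : all large s -> large t ->
  cf_eval (x :: s ++ [:: t]) = mob_app (continuant (x :: s)) t.
Proof.
move=> + ht; elim: s x => [|y s IHs] x.
  by rewrite mob_app_cons /mob_app /= ?mul1r ?addr0 ?mul0r ?add0r ?divr1 ?large_neq0.
case/andP=> hy hs.
have : large (cf_eval (y :: s ++ [:: t])).
  by apply: large_cf_eval => //=; rewrite hy all_cat /= ht !andbT.
rewrite IHs // => yl; rewrite cat_cons cf_eval_cons // IHs // [RHS]mob_app_cons //.
by apply: contraTneq yl => N0; rewrite /large /mob_app N0 mul0r av0 ltr10.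
Qed.

Lemma av_continuant s : all large s ->
  [/\ av (mob_a (continuant s)) = \prod_(x <- s) av x,
      av (mob_b (continuant s)) < av (mob_a (continuant s)),
      av (mob_c (continuant s)) < av (mob_a (continuant s))
    & av (mob_d (continuant s)) <= av (mob_a (continuant s))].
Proof.
elim: s => [|x s IHs] /=; first by rewrite big_nil av1 av0 ltr01 lexx.
case/andP=> hx /IHs [ha hb hc hd]; set A := mob_a (continuant s).
have A0 : 0 < av A by apply: le_lt_trans (av_ge0 _) hc.
have hxA : av A < av x * av A by rewrite -[X in X < _]mul1r ltr_pM2r.
have -> : av (x * A + mob_c (continuant s)) = av x * av A.
  by rewrite addrC avD_eq avM // (lt_trans hc hxA).
rewrite big_cons -ha; split=> //; last exact: ltW (lt_trans hb hxA).
apply: avD_lt; last exact: le_lt_trans hd hxA.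
by rewrite avM ltr_pM2l // (lt_trans ltr01 hx).
Qed.

Lemma av_continuant_a_gt0 s : all large s -> 0 < av (mob_a (continuant s)).
Proof. by case/av_continuant=> _ hb _ _; apply: le_lt_trans (av_ge0 _) hb. Qed.

Lemma continuant_c_neq0 s : s != [::] -> all large s -> mob_c (continuant s) != 0.
Proof. by case: s => // x s _ /andP [_ hs]; rewrite -av_gt0 av_continuant_a_gt0. Qed.

Lemma av_mob_den_large s t : all large s -> large t ->
  av (mob_a (continuant s) * t + mob_b (continuant s)) = av (mob_a (continuant s)) * av t.
Proof.
move=> hs ht; have [_ hb _ _] := av_continuant hs.
rewrite addrC avD_eq avM //; apply: lt_le_trans hb _.
by rewrite -[X in X <= _]mulr1 ler_wpM2l ?av_ge0 ?ltW.
Qed.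

Lemma av_mob_den_conj s y b t : all large (rcons s y) -> large b ->
  1 <= av (y - b) -> av (t^-1 + b) < 1 ->
  av (mob_a (continuant (rcons s y)) * t + mob_b (continuant (rcons s y))) =
  av (mob_a (continuant s)) * av (y - b) / av b.
Proof.
rewrite all_rcons => /andP [_ hs] hb hyb ht.
have [_ hB _ _] := av_continuant hs; have A0 := av_continuant_a_gt0 hs.
set A := mob_a (continuant s); set B := mob_b (continuant s).
have avt : av t^-1 = av b := av_near_opp ht hb.
have t0 : t != 0 by apply: contraTneq hb => t0; rewrite /large -avt t0 invr0 av0 ltr10.
rewrite continuant_rcons /= -/A -/B.
have -> : (A * y + B) * t + A = t * ((A * (t^-1 + b) + B) + A * (y - b)) by field.
have hAyb : av A <= av (A * (y - b)) by rewrite avM -[X in X <= _]mulr1 ler_wpM2l ?av_ge0.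
rewrite avM (avD_eq (y := A * (y - b))); last first.
  apply: avD_lt; last exact: lt_le_trans hB hAyb.
  by rewrite avM (lt_le_trans _ hAyb) // -[X in _ < X]mulr1 ltr_pM2l.
by rewrite avM mulrC -avt avV invrK.
Qed.

Lemma continuant_dens_neq0 s y b t t' : all large (rcons s y) -> large b -> large t ->
  1 <= av (y - b) -> av (t'^-1 + b) < 1 ->
  mob_a (continuant (rcons s y)) * t + mob_b (continuant (rcons s y)) != 0 /\
  mob_a (continuant (rcons s y)) * t' + mob_b (continuant (rcons s y)) != 0.
Proof.
move=> hsy hb ht hyb ht'; rewrite -!av_gt0 av_mob_den_large // (av_mob_den_conj hsy hb hyb ht').
have hs : all large s by move: hsy; rewrite all_rcons => /andP [].
by rewrite !mulr_gt0 ?invr_gt0 ?av_continuant_a_gt0 ?(lt_trans ltr01 ht)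
  ?(lt_le_trans ltr01 hyb) ?(lt_trans ltr01 hb).
Qed.

Lemma av_mob_sub_conj x s y b t t' : all large (rcons s y) -> large b -> large t ->
  1 <= av (y - b) -> av (t'^-1 + b) < 1 ->
  let M := continuant (x :: rcons s y) in
  av (mob_app M t - mob_app M t') =
  av b / (av (mob_a (continuant (rcons s y))) * av (mob_a (continuant s)) * av (y - b)).
Proof.
move=> hsy hb ht hyb ht' M.
have Dt := av_mob_den_large hsy ht; have Dt' := av_mob_den_conj hsy hb hyb ht'.
have A0 := av_continuant_a_gt0 hsy.
have A'0 : 0 < av (mob_a (continuant s)).
  by apply: av_continuant_a_gt0; move: hsy; rewrite all_rcons => /andP [].
have b0 : 0 < av b := lt_trans ltr01 hb.
have t0 : 0 < av t := lt_trans ltr01 ht.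
have yb0 : 0 < av (y - b) := lt_le_trans ltr01 hyb.
have avt' : av t' = (av b)^-1 by rewrite -[t']invrK avV (av_near_opp ht' hb).
have avtt' : av (t - t') = av t.
  rewrite addrC avD_eq // avN avt'; apply: lt_trans ht.
  by rewrite invf_lt1.
have [D0 D0'] := continuant_dens_neq0 hsy hb ht hyb ht'.
rewrite mob_app_sub // avM avM avV avM Dt Dt' avtt' mob_det_continuant avX avN av1 expr1n mul1r.
by field; rewrite !gt_eqF.
Qed.

Lemma converges_to_unique u l1 l2 :
  converges_to av u l1 -> converges_to av u l2 -> l1 = l2.
Proof.
move=> h1 h2; apply/eqP; rewrite -subr_eq0; apply/negP => /negP; rewrite -av_gt0 => pos.
have [N1 hN1] := h1 _ pos; have [N2 hN2] := h2 _ pos; set N := maxn N1 N2.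
have h1N : av (- (u N - l1)) < av (l1 - l2) by rewrite avN hN1 ?leq_maxl.
have := avD_lt (hN2 N (leq_maxr _ _)) h1N.
by rewrite (_ : _ + _ = l1 - l2) ?ltxx //; ring.
Qed.

Lemma converges_to_av u l r :
  0 < r -> (forall n, av (u n) = r) -> converges_to av u l -> av l = r.
Proof.
move=> r0 hu /(_ r r0) [N hN].
rewrite -(subKr (u N) l) addrC avD_eq hu // avN; exact: hN.
Qed.

Lemma converges_to_inv u l : l != 0 -> (forall n, av (u n)^-1 = av l) ->
  converges_to av (fun n => (u n)^-1) l -> converges_to av u l^-1.
Proof.
move=> l0 hu hl eps eps0; have al0 : 0 < av l by rewrite av_gt0.
have eps' : 0 < eps * av l ^+ 2 by rewrite mulr_gt0 ?exprn_gt0.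
have [N hN] := hl _ eps'.
exists N => n /hN h.
have un0 : u n != 0.
  by apply: (contraTneq _ al0) => un0; rewrite -(hu n) un0 invr0 av0 ltxx.
have -> : u n - l^-1 = ((u n)^-1 - l) / - ((u n)^-1 * l).
  by field; rewrite oppr_eq0 un0 l0.
by rewrite avM avV avN avM hu -expr2 ltr_pdivrMr ?exprn_gt0.
Qed.

Lemma converges_to_tail u w l k : (forall n, w n = u n.+1 - k) ->
  converges_to av u l -> converges_to av w (l - k).
Proof.
move=> hw hu eps /hu [N hN]; exists N => n hn.
have -> : w n - (l - k) = u n.+1 - l by rewrite hw; ring.
exact/hN/leqW.
Qed.

Section PolynomialQuotients.
Variables (F : finFieldType) (emb : {rmorphism {fraction {poly F}} -> L}).
Hypothesis av_poly :
  forall p : {poly F}, p != 0 -> av (emb (tof p)) = qF F R ^+ (size p).-1.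

Local Notation "p %:L" := (emb (tof p)) (at level 2, format "p %:L").

Lemma qF_gt1 : 1 < qF F R.
Proof. by rewrite /qF ltr1n card_finNzRing_gt1. Qed.

Lemma qF_neq0 : qF F R != 0.
Proof. exact: lt0r_neq0 (lt_trans ltr01 qF_gt1). Qed.

Lemma av_poly_ge1 p : p != 0 -> 1 <= av p%:L.
Proof. by move=> p0; rewrite av_poly // exprn_ege1 // ltW // qF_gt1. Qed.

Lemma av_poly_lt p r :
  p != 0 -> r != 0 -> (av p%:L < av r%:L) = (size p < size r)%N.
Proof.
move=> p0 r0; rewrite !av_poly // ltr_eXn2l ?qF_gt1 //.
by rewrite -!subn1 ltn_sub2rE // size_poly_gt0.
Qed.

Lemma nonconst_neq0 (p : {poly F}) : nonconst p -> p != 0.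
Proof. by rewrite -size_poly_gt0; apply: ltn_trans. Qed.

Lemma large_poly p : nonconst p -> large p%:L.
Proof.
move=> hp; rewrite /large av_poly ?nonconst_neq0 // exprn_egt1 ?qF_gt1 //.
by move: hp; rewrite /nonconst; case: (size p) => [|[]].
Qed.

Lemma all_large_poly s : all (@nonconst F) s -> all large [seq p%:L | p <- s].
Proof. by move=> hs; rewrite all_map; apply: sub_all hs => p /large_poly. Qed.

Lemma av_poly_pow p : p != 0 -> av p%:L = qF F R ^ pdeg p.
Proof. by move=> p0; rewrite av_poly // exprnP. Qed.

Lemma av_continuant_poly s : all (@nonconst F) s ->
  av (mob_a (continuant [seq p%:L | p <- s])) = qF F R ^ (\sum_(p <- s) pdeg p).
Proof.
move=> hs; have [-> _ _ _] := av_continuant (all_large_poly hs); rewrite big_map.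
elim: s hs => [|p s IHs] /=; first by rewrite !big_nil expr0z.
case/andP=> hp hs; rewrite !big_cons IHs // expfzDr ?qF_neq0 //.
by rewrite av_poly_pow ?nonconst_neq0.
Qed.

Lemma convergentS a n :
  convergent emb a n.+1 = (a 0%N)%:L + (convergent emb (fun k => a k.+1) n)^-1.
Proof. by rewrite /convergent map_iota0S cf_eval_cons. Qed.

Lemma av_convergent a n :
  (forall k, nonconst (a k)) -> av (convergent emb a n) = av (a 0%N)%:L.
Proof.
move=> ha; rewrite /convergent map_iota0S av_cf_eval //= large_poly //.
by rewrite all_map; apply/allP => i _; apply: large_poly.
Qed.

Lemma cf_value_ext a b x : a =1 b -> cf_value emb av a x -> cf_value emb av b x.
Proof.
move=> eq_ab hx eps /hx [N hN]; exists N => n /hN.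
by rewrite /convergent (eq_map (fun i => congr1 (fun p => p%:L) (eq_ab i))).
Qed.

Lemma cf_value_av a x :
  (forall n, nonconst (a n)) -> cf_value emb av a x -> av x = av (a 0%N)%:L.
Proof.
move=> ha /converges_to_av; apply; last by move=> n; apply: av_convergent.
exact: lt_trans ltr01 (large_poly (ha 0%N)).
Qed.

Lemma cf_value_cons a x : (forall n, nonconst (a n.+1)) -> cf_value emb av a x ->
  exists2 y, cf_value emb av (fun n => a n.+1) y & x = (a 0%N)%:L + y^-1.
Proof.
move=> ha hx; set c := convergent emb (fun n => a n.+1).
have hc n : av (c n) = av (a 1%N)%:L by apply: av_convergent.
have a1_gt0 : 0 < av (a 1%N)%:L := lt_trans ltr01 (large_poly (ha 0%N)).
have hcV : converges_to av (fun n => (c n)^-1) (x - (a 0%N)%:L).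
  by apply: converges_to_tail hx => n; rewrite convergentS addrC addKr.
have hxa : av (x - (a 0%N)%:L) = (av (a 1%N)%:L)^-1.
  by apply: converges_to_av hcV => [|n]; rewrite ?invr_gt0 // avV hc.
exists (x - (a 0%N)%:L)^-1; last by rewrite invrK addrC subrK.
apply: converges_to_inv hcV => [|n]; last by rewrite hxa avV hc.
by apply: contra_eq_neq hxa => ->; rewrite av0 eq_sym invr_neq0 // gt_eqF.
Qed.

Lemma cf_value_cat m a x : (forall n, nonconst (a n.+1)) -> cf_value emb av a x ->
  exists2 y, cf_value emb av (fun n => a (n + m)%N) y &
             x = cf_eval ([seq (a i)%:L | i <- iota 0 m] ++ [:: y]).
Proof.
elim: m a x => [|m IHm] a x ha hx.
  by exists x => //; apply: cf_value_ext hx => n; rewrite addn0.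
have [y1 hy1 ->] := cf_value_cons ha hx.
have [y hy ->] := IHm _ _ (fun n => ha n.+1) hy1.
exists y; first by apply: cf_value_ext hy => n; rewrite addnS.
by rewrite map_iota0S cat_cons cf_eval_cons //; case: (iota 0 m).
Qed.

(* If [x = u/w], the tail [y] of the expansion equals [w/u'] with [deg u' < deg w]. *)
Lemma cf_value_notK a x :
  (forall n, nonconst (a n.+1)) -> cf_value emb av a x -> ~ inK emb x.
Proof.
move=> ha hx [k xk]; have [u [w [w0 kuw]]] := frac_numden k.
rewrite {}xk {}kuw fmorph_div in hx.
have [n] := ubnP (size w); elim: n => // n IHn in a u w ha hx w0 * => hw.
have [y hy hxy] := cf_value_cons ha hx.
have ew0 : w%:L != 0 by rewrite fmorph_eq0 tofrac_eq0.
pose u' := u - a 0%N * w.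
have yE : y^-1 = u'%:L / w%:L.
  by rewrite /u' /tof tofracB tofracM !rmorphB rmorphM mulrBl mulfK // hxy addrC addKr.
have y_large : large y by rewrite /large (cf_value_av ha hy); exact: large_poly.
have u0 : u' != 0.
  apply: contraTneq y_large => u0; rewrite /large -[y]invrK yE u0.
  by rewrite /tof tofrac0 rmorph0 mul0r invr0 av0 ltr10.
have hu : (size u' < size w)%N.
  by rewrite -av_poly_lt // -[av w%:L]mul1r -ltr_pdivrMr ?av_gt0 // -avV -avM -yE avV_lt1.
apply: (IHn (fun k => a k.+1) w u' (fun k => ha k.+1) _ u0 (leq_trans hu hw)).
by rewrite -invf_div -yE invrK.
Qed.

Lemma pq_cf_value a0 as_ bs x :
  all (@nonconst F) as_ -> all (@nonconst F) bs -> (0 < size bs)%N ->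
  cf_value emb av (pq a0 as_ bs) x ->
  exists2 y, cf_value emb av (fun n => nth 0 bs (n %% size bs)) y &
             x = cf_eval ([seq p%:L | p <- a0 :: as_] ++ [:: y]).
Proof.
move=> has hbs bs0 hx.
have [y hy ->] := cf_value_cat (size as_).+1 (fun n => pq_nonconst a0 n has hbs bs0) hx.
exists y.
  apply: cf_value_ext hy => n; rewrite /pq addnS /= ltnNge leq_addl /=.
  by rewrite addnK.
congr (cf_eval (_ ++ _)); rewrite map_iota0S /=; congr cons.
rewrite -[in RHS](mkseq_nth 0 as_) /mkseq -map_comp; apply/eq_in_map => i.
by rewrite mem_iota => /andP [_ hi]; rewrite /= /pq /= hi.
Qed.

Lemma periodic_cf_value bs y : all (@nonconst F) bs -> (0 < size bs)%N ->
  cf_value emb av (fun n => nth 0 bs (n %% size bs)) y ->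
  y = cf_eval ([seq p%:L | p <- bs] ++ [:: y]).
Proof.
move=> hbs bs0 hy.
have [y' hy' Ey] :=
  cf_value_cat (size bs) (fun n => periodic_nonconst n.+1 hbs bs0) hy.
have y'y : y' = y.
  by apply: converges_to_unique hy' _; apply: cf_value_ext hy => n; rewrite modnDr.
rewrite {1}Ey y'y; congr (cf_eval (_ ++ _)).
rewrite -[in RHS](mkseq_nth 0 bs) /mkseq -map_comp; apply/eq_in_map => i.
by rewrite mem_iota => /andP [_ hi]; rewrite /= modn_small.
Qed.

(* The witness is the second root of the fixed-point equation, given by Vieta. *)
Lemma mob_fixed_conj (s : seq {fraction {poly F}}) z y :
  all large [seq emb k | k <- rcons s z] -> large y -> ~ inK emb y ->
  mob_app (continuant [seq emb k | k <- rcons s z]) y = y ->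
  exists y', quad_conj emb y y' /\ av (y'^-1 + emb z) < 1.
Proof.
move=> hl yl yK; rewrite continuant_map; set M := continuant (rcons s z) => fy.
have [zl hs] : large (emb z) /\ all large [seq emb k | k <- s].
  by move: hl; rewrite map_rcons all_rcons => /andP [].
set A := continuant [seq emb k | k <- s].
have [Ea Eb Ed] : [/\ emb (mob_a M) = mob_a A * emb z + mob_b A,
    emb (mob_b M) = mob_a A & emb (mob_d M) = mob_c A].
  by have := continuant_map emb (rcons s z); rewrite map_rcons continuant_rcons => -[<- <- _ <-].
have A0 : mob_a A != 0 by rewrite -av_gt0 av_continuant_a_gt0.
have y0 := large_neq0 yl.
have Q0 : mob_c M != 0.
  rewrite -(fmorph_eq0 emb) -[emb _]/(mob_c (mob_map emb M)) -continuant_map.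
  by apply: continuant_c_neq0 hl; rewrite -size_eq0 size_map size_rcons.
have D0 : emb (mob_c M) * y + emb (mob_d M) != 0.
  by apply: contraTneq yl => D0; rewrite /large -fy /mob_app /= D0 invr0 mulr0 av0 ltr10.
have hq : quad emb (mob_c M) (mob_d M - mob_a M) (- mob_b M) y = 0.
  by rewrite /quad rmorphB rmorphN; apply: (mob_app_fixed (M := mob_map emb M)).
pose u := (emb (mob_d M) - emb (mob_a M)) / emb (mob_b M) - y^-1.
have hu : av (u + emb z) < 1.
  have -> : u + emb z = (mob_c A - mob_b A) / mob_a A - y^-1.
    by rewrite /u Ea Eb Ed; field; rewrite A0 y0.
  have [_ hb hc _] := av_continuant hs.
  apply: avD_lt; last by rewrite avN avV_lt1.
  rewrite avM avV ltr_pdivrMr ?av_gt0 // mul1r.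
  by apply: avD_lt; rewrite ?avN.
have u0 : u != 0 by rewrite -av_gt0 (av_near_opp hu zl) (lt_trans ltr01 zl).
exists u^-1; split; last by rewrite invrK.
apply: (quad_conj_root yK Q0 hq); apply: (quadratic_other_root _ _ _ _ hq).
- by rewrite rmorphN Eb oppr_eq0.
- exact: y0.
- by rewrite invr_eq0.
by rewrite invrK /u rmorphB rmorphN; field; rewrite oppr_eq0 Eb A0 y0.
Qed.

Lemma av_conj_sub_pow a0 as' ar b t t' :
  all (@nonconst F) (rcons as' ar) -> nonconst b -> ar != b ->
  large t -> av (t'^-1 + b%:L) < 1 ->
  let M := continuant [seq p%:L | p <- a0 :: rcons as' ar] in
  (av (mob_app M t - mob_app M t'))^-1 =
  qF F R ^ (2 * (\sum_(p <- rcons as' ar) pdeg p) - pdeg ar - pdeg b + pdeg (ar - b)).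
Proof.
move=> hs hb hab ht ht' M.
have hs' : all (@nonconst F) as' by move: hs; rewrite all_rcons => /andP [].
have ab0 : ar - b != 0 by rewrite subr_eq0.
have Eab : ar%:L - b%:L = (ar - b)%:L by rewrite /tof tofracB rmorphB.
have ab1 : 1 <= av (ar%:L - b%:L) by rewrite Eab av_poly_ge1.
have hl := all_large_poly hs; rewrite map_rcons in hl.
rewrite /M /= map_rcons (av_mob_sub_conj _ hl (large_poly hb)) // -map_rcons.
rewrite !av_continuant_poly // Eab (av_poly_pow ab0) av_poly_pow ?nonconst_neq0 // big_rcons /=.
rewrite invf_div -!expfzDr ?qF_neq0 // invr_expz -expfzDr ?qF_neq0 //.
by congr (_ ^ _); ring.
Qed.

Lemma periodic_conj bs bl y : all (@nonconst F) (rcons bs bl) ->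
  cf_value emb av (fun n => nth 0 (rcons bs bl) (n %% size (rcons bs bl))) y ->
  large y /\ exists y', quad_conj emb y y' /\ av (y'^-1 + bl%:L) < 1.
Proof.
move=> hbs hy; have bs0 : (0 < size (rcons bs bl))%N by rewrite size_rcons.
have hb n := periodic_nonconst n hbs bs0.
have yl : large y by rewrite /large (cf_value_av hb hy); apply: large_poly.
split=> //; apply: (mob_fixed_conj (s := map (@tof F) bs) (z := tof bl)) => //.
- by rewrite -map_rcons -map_comp; apply: all_large_poly.
- exact: cf_value_notK (fun n => hb n.+1) hy.
rewrite -map_rcons -map_comp.
move: (periodic_cf_value hbs bs0 hy) (all_large_poly hbs).
case: [seq p%:L | p <- rcons bs bl] => [_ _|x s /= fy /andP [_ hs]].
  by rewrite /mob_app /= mul1r addr0 mul0r add0r divr1.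
by rewrite -cf_eval_mob // -fy.
Qed.

Lemma cf_value_pq_conj a0 as' ar bs bl x :
  all (@nonconst F) (rcons as' ar) -> all (@nonconst F) (rcons bs bl) -> ar != bl ->
  cf_value emb av (pq a0 (rcons as' ar) (rcons bs bl)) x ->
  exists2 x', quad_conj emb x x' &
    (av (x - x'))^-1 = qF F R ^ (2 * (\sum_(p <- rcons as' ar) pdeg p)
                                 - pdeg ar - pdeg bl + pdeg (ar - bl)).
Proof.
move=> has hbs hab hx; have bs0 : (0 < size (rcons bs bl))%N by rewrite size_rcons.
have [y hy ->] := pq_cf_value has hbs bs0 hx.
have [yl [y' [conj small]]] := periodic_conj hbs hy.
have hl := all_large_poly has; rewrite map_rcons in hl.
set M := continuant [seq p%:L | p <- a0 :: rcons as' ar].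
have EM : M = mob_map emb (continuant [seq tof p | p <- a0 :: rcons as' ar]).
  by rewrite -continuant_map -map_comp.
have bl1 : 1 <= av (ar%:L - bl%:L).
  by rewrite -rmorphB -tofracB av_poly_ge1 // subr_eq0.
have hbl : nonconst bl by apply: (allP hbs); rewrite mem_rcons mem_head.
have -> : cf_eval ([seq p%:L | p <- a0 :: rcons as' ar] ++ [:: y]) = mob_app M y.
  by apply: cf_eval_mob; rewrite ?all_large_poly.
exists (mob_app M y'); last exact: av_conj_sub_pow.
have [D0 D0'] := continuant_dens_neq0 hl (large_poly hbl) yl bl1 small.
by rewrite EM; apply: quad_conj_mob conj; rewrite -EM /= map_rcons.
Qed.

End PolynomialQuotients.

End UltrametricField.

Theorem lemma2p2 (F : finFieldType) (L : fieldType) (R : realType)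
  (emb : {rmorphism {fraction {poly F}} -> L}) (av : L -> R)
  (HK : is_Khat emb av)
  (a0 : {poly F}) (as_ bs : seq {poly F})
  (Hr : (1 <= size as_)%N) (Hs : (1 <= size bs)%N)
  (Has : all (@nonconst F) as_) (Hbs : all (@nonconst F) bs)
  (alpha alphas : L)
  (Halpha : cf_value emb av (pq a0 as_ bs) alpha)
  (Hconj : galois_conj emb alpha alphas)
  (Hne : last 0 as_ != last 0 bs) :
  (av (alpha - alphas))^-1 =
    (#|F|%:R : R) ^ (2 * (\sum_(p <- as_) pdeg p) - pdeg (last 0 as_)
              - pdeg (last 0 bs) + pdeg (last 0 as_ - last 0 bs)).
Proof.
have [eq0 [ge0 [mul [ultra [av_poly _]]]]] := HK.
have Hav : ultrametric_abs av by split.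
case/lastP: as_ Hr Has Halpha Hne => [//|as' ar] _ Has Halpha.
case/lastP: bs Hs Hbs Halpha => [//|bs' bl] Hs Hbs Halpha.
rewrite !last_rcons => Hne.
have [alpha' conj E] := cf_value_pq_conj Hav av_poly Has Hbs Hne Halpha.
suff -> : alphas = alpha' by [].
apply: (galois_conj_eq _ Hconj conj).
  exact: (cf_value_notK Hav av_poly (fun n => pq_nonconst a0 n Has Hbs Hs) Halpha).
apply/eqP => alpha'E; move: E; rewrite alpha'E subrr (av0 Hav) invr0 => /esym/eqP.
by rewrite (negbTE (expfz_neq0 _ (qF_neq0 R F))).
Qed.
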